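(* Let $(G,V,f)$ be an instance of coset identification and let $\mathcal{A}$ be a $t$-query adaptive algorithm with no workspace, given by a unit vector $\psi\in V$, unitaries $U_1,\dots,U_t$ on $V$ and a POVM $\{E_x\}_{x\in X}$ on $V$. Define the algorithm $\mathcal{A}'$ on $V\otimes\mathbb{C}G$ with input $|\psi\rangle\otimes|\eta\rangle$, where $|\eta\rangle=|G|^{-1/2}\sum_{g\in G}|g\rangle$, intermediate unitaries $(U_i\otimes I)\circ CM$ ($i=1,\dots,t$), oracle $\pi(a)\otimes I$, and POVM $E'_x=\sum_{g\in G}E_{g^{-1}x}\otimes|g\rangle\langle g|$; i.e. on hidden $a$ it produces $(U_t\otimes I)CM(\pi(a)\otimes I)\cdots(U_1\otimes I)CM(\pi(a)\otimes I)|\psi,\eta\rangle$ and measures with $\{E'_x\}$. Then $\mathcal{A}'$ has the same average success probability as $\mathcal{A}$.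
   Context: Coset identification: $G$ finite group, $\pi:G\to U(V)$ a finite-dimensional unitary representation, $f:G\to X$ a surjective map of left $G$-sets onto a transitive $G$-set $X$. $CM$ is the operator on $V\otimes\mathbb{C}G$ with $CM|v,g\rangle=|\pi(g^{-1})v,g\rangle$, where $\mathbb{C}G$ has orthonormal basis $\{|g\rangle\}$. For an algorithm producing state $\psi_a$ on hidden $a$ with POVM $\{E_x\}$, the average success probability is $\frac1{|G|}\sum_a\langle\psi_a|E_{f(a)}|\psi_a\rangle$; for $\mathcal{A}$ the state is $U_t\pi(a)\cdots U_1\pi(a)\psi$. *)

From HB Require Import structures.
From mathcomp Require Import all_boot all_order all_algebra all_fingroup.
From mathcomp Require Import mxrepresentation algC.
From mathcomp Require Export spectral.

Set Implicit Arguments.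
Unset Strict Implicit.
Unset Printing Implicit Defensive.

Import Order.TTheory GRing.Theory Num.Theory.
Local Open Scope ring_scope.
Local Open Scope sesquilinear_scope.

Definition expect n (M : 'M[algC]_n) (u : 'cV[algC]_n) : algC :=
  (u ^t* *m M *m u) 0 0.

Definition unit_vector n (u : 'cV[algC]_n) : Prop := (u ^t* *m u) 0 0 = 1.

Definition psd n (E : 'M[algC]_n) : Prop :=
  E ^t* = E /\ forall v : 'cV[algC]_n, 0 <= expect E v.

Definition is_POVM (X : finType) n (E : X -> 'M[algC]_n) : Prop :=
  (forall x, psd (E x)) /\ \sum_(x : X) E x = 1%:M.

Definition is_left_action (gT : finGroupType) (X : finType)
  (act : gT -> X -> X) : Prop :=
  (forall x, act 1%g x = x) /\
  (forall g h x, act (g * h)%g x = act g (act h x)).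

Definition transitive_action (gT : finGroupType) (X : finType)
  (act : gT -> X -> X) : Prop := forall x y, exists g, act g x = y.

Definition Gmap (gT : finGroupType) (X : finType) (act : gT -> X -> X)
  (f : gT -> X) : Prop := forall g a, f (g * a)%g = act g (f a).

(* Run of a t-query adaptive algorithm with no workspace on V:
   U_t O ... U_1 O psi, where Us = [:: U_1; ...; U_t]. *)
Definition run n (Us : seq 'M[algC]_n) (O : 'M[algC]_n) (psi : 'cV[algC]_n) :=
  foldl (fun s U => U *m (O *m s)) psi Us.

Definition succ_prob (gT : finGroupType) (X : finType) n
  (rG : gT -> 'M[algC]_n) (f : gT -> X) (psi : 'cV[algC]_n)
  (Us : seq 'M[algC]_n) (E : X -> 'M[algC]_n) : algC :=
  (#|gT|%:R)^-1 * \sum_(a : gT) expect (E (f a)) (run Us (rG a) psi).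

(* ---- The space V (x) CG ----
   A vector of V (x) CG is represented by its components along the
   orthonormal basis {|g>} of CG:  Psi = sum_g Psi(g) (x) |g>,
   i.e. as a function gT -> V. *)
Definition tspace (gT : finGroupType) n := {ffun gT -> 'cV[algC]_n}.

Definition tens (gT : finGroupType) n (v : 'cV[algC]_n) (w : gT -> algC)
  : tspace gT n := [ffun h => w h *: v].

Definition eta (gT : finGroupType) : gT -> algC :=
  fun _ => (sqrtC (#|gT|%:R))^-1.

(* The operator  sum_g F(g) (x) |g><g|  on V (x) CG. *)
Definition blockdiag (gT : finGroupType) n (F : gT -> 'M[algC]_n)
  (Psi : tspace gT n) : tspace gT n := [ffun h => F h *m Psi h].

Definition tensI (gT : finGroupType) n (A : 'M[algC]_n) :=
  @blockdiag gT n (fun _ => A).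

(* CM |v,g> = |pi(g^-1) v, g>, i.e. CM = sum_g pi(g^-1) (x) |g><g| *)
Definition CM (gT : finGroupType) n (rG : gT -> 'M[algC]_n) :=
  @blockdiag gT n (fun g => rG (g^-1)%g).

Definition texpect (gT : finGroupType) n
  (M : tspace gT n -> tspace gT n) (Psi : tspace gT n) : algC :=
  \sum_(h : gT) (Psi h ^t* *m (M Psi) h) 0 0.

Definition Eprime (gT : finGroupType) (X : finType) n (act : gT -> X -> X)
  (E : X -> 'M[algC]_n) (x : X) :=
  @blockdiag gT n (fun g => E (act (g^-1)%g x)).

Definition run' (gT : finGroupType) n (rG : gT -> 'M[algC]_n)
  (Us : seq 'M[algC]_n) (a : gT) (psi : 'cV[algC]_n) : tspace gT n :=
  foldl (fun s U => tensI U (CM rG (tensI (rG a) s))) (tens psi (@eta gT)) Us.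

Definition succ_prob' (gT : finGroupType) (X : finType) n
  (rG : gT -> 'M[algC]_n) (act : gT -> X -> X) (f : gT -> X)
  (psi : 'cV[algC]_n) (Us : seq 'M[algC]_n) (E : X -> 'M[algC]_n) : algC :=
  (#|gT|%:R)^-1 *
  \sum_(a : gT) texpect (Eprime act E (f a)) (run' rG Us a psi).

From Pilot Require Import Defs.
From HB Require Import structures.
From mathcomp Require Import all_boot all_order all_algebra all_fingroup.
From mathcomp Require Import mxrepresentation algC spectral.

(* Since CM undoes the oracle on the |h> branch, the h-component of the final
   state of A' on hidden a is eta(h) times the final state of A on hidden
   h^-1 a, and E'_{f a} measures it with E_{h^-1 f(a)} = E_{f(h^-1 a)}.  So the
   success probability of A' on a is the average over h of that of A on
   h^-1 a, and averaging over a, the translation a |-> h^-1 a is a bijection. *)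

Set Implicit Arguments.
Unset Strict Implicit.
Unset Printing Implicit Defensive.

Import Order.TTheory GRing.Theory Num.Theory.
Local Open Scope ring_scope.
Local Open Scope sesquilinear_scope.

Lemma expectZ n (M : 'M[algC]_n) (c : algC) (v : 'cV[algC]_n) :
  expect M (c *: v) = c^* * c * expect M v.
Proof.
have conjZ : (c *: v)^t* = c^* *: v^t*.
  by apply/matrixP => i j; rewrite !mxE rmorphM.
by rewrite /expect conjZ -!scalemxAl -scalemxAr !mxE mulrA.
Qed.

Lemma texpect_blockdiag (gT : finGroupType) n (F : gT -> 'M[algC]_n)
    (Psi : tspace gT n) :
  texpect (blockdiag F) Psi = \sum_h expect (F h) (Psi h).
Proof. by apply: eq_bigr => h _; rewrite ffunE /expect mulmxA. Qed.

Lemma eta_normsq (gT : finGroupType) (h : gT) :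
  (Defs.eta h)^* * Defs.eta h = #|gT|%:R^-1.
Proof.
rewrite /Defs.eta geC0_conj ?invr_ge0 ?sqrtC_ge0 ?ler0n //.
by rewrite -expr2 exprVn sqrtCK.
Qed.

Section RunComponents.

Variables (gT : finGroupType) (n : nat).
Variable rG : mx_representation algC [set: gT]%G n.

Lemma run'_step_componentsE (U : 'M[algC]_n) (a : gT) (w : gT -> algC)
    (s : tspace gT n) (v : gT -> 'cV[algC]_n) :
    (forall k, s k = w k *: v k) ->
  forall k, tensI U (CM rG (tensI (rG a) s)) k
            = w k *: (U *m (rG (k^-1 * a)%g *m v k)).
Proof.
move=> sE k; rewrite !ffunE sE -!scalemxAr.
by rewrite mulmxA repr_mxM ?in_setT // !mulmxA.
Qed.

Lemma foldl_run'_componentsE (Us : seq 'M[algC]_n) (a : gT) (w : gT -> algC)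
    (s : tspace gT n) (v : gT -> 'cV[algC]_n) :
    (forall k, s k = w k *: v k) ->
  forall h, foldl (fun s U => tensI U (CM rG (tensI (rG a) s))) s Us h
            = w h *: run Us (rG (h^-1 * a)%g) (v h).
Proof.
elim: Us s v => [|U Us IH] s v sE h /=; first exact: sE.
exact: (IH _ _ (run'_step_componentsE U a sE)).
Qed.

Lemma run'E (Us : seq 'M[algC]_n) (a : gT) (psi : 'cV[algC]_n) (h : gT) :
  run' rG Us a psi h = Defs.eta h *: run Us (rG (h^-1 * a)%g) psi.
Proof.
by apply: (@foldl_run'_componentsE Us a _ _ (fun=> psi)) => k; rewrite ffunE.
Qed.

End RunComponents.

Lemma sum_translates (gT : finGroupType) (M : nmodType) (F : gT -> M) :
  \sum_(a : gT) \sum_(h : gT) F (h^-1 * a)%g = (\sum_(g : gT) F g) *+ #|gT|.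
Proof.
rewrite exchange_big -sumr_const; apply: eq_bigr => h _.
by rewrite (reindex_inj (mulgI h)); apply: eq_bigr => a _; rewrite mulKg.
Qed.

Theorem lemma5 (gT : finGroupType) (n : nat)
  (rG : mx_representation algC [set: gT]%G n)
  (rG_unitary : forall g : gT, rG g \is unitarymx)
  (X : finType) (act : gT -> X -> X)
  (act_ok : is_left_action act) (act_trans : transitive_action act)
  (f : gT -> X) (f_Gmap : Gmap act f) (f_surj : forall x : X, exists a, f a = x)
  (psi : 'cV[algC]_n) (psi_unit : unit_vector psi)
  (Us : seq 'M[algC]_n) (Us_unitary : forall U, U \in Us -> U \is unitarymx)
  (E : X -> 'M[algC]_n) (E_POVM : is_POVM E) :
  succ_prob' rG act f psi Us E = succ_prob rG f psi Us E.
Proof.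
pose P g := expect (E (f g)) (run Us (rG g) psi).
have texpectE a : texpect (Eprime act E (f a)) (run' rG Us a psi)
                  = #|gT|%:R^-1 * \sum_h P (h^-1 * a)%g.
  rewrite texpect_blockdiag mulr_sumr; apply: eq_bigr => h _.
  by rewrite run'E expectZ eta_normsq -f_Gmap.
have cardG_neq0 : #|gT|%:R != 0 :> algC.
  by rewrite pnatr_eq0 -lt0n; apply/card_gt0P; exists 1%g.
rewrite /succ_prob' /succ_prob; congr (_ * _).
under eq_bigr => a _ do rewrite texpectE.
by rewrite -mulr_sumr sum_translates -(mulr_natl (\sum_g P g)) mulKf.
Qed.
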